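(* Consider the job set $J$ described in the context with $p_\ell$ sufficiently large. Let $j\in\{3,\dots,n\}$ and let $\sigma=(M_1,M_2)$ be a schedule of $J$ with $\omega_j(\sigma)=0$, $\omega_i(\sigma)=1$ for all $i\in\{1,\dots,j-1\}$, and $\ell\in M_1$. Then $\sigma$ can be improved, by a sequence of improving 3-swaps, to a schedule with $\omega_j=1$ and $\omega_i=0$ for all $i\in\{1,\dots,j-1\}$.
   Context: Two identical machines; a schedule $\sigma=(M_1,M_2)$ partitions the jobs into sets processed on machines 1 and 2, with loads $L_i=\sum_{j\in M_i}p_j$ and makespan $\max_iL_i$. Fix $n\ge3$ and the job set $J=\{a_i,b_i,c_i:1\le i\le n\}\cup\{\ell\}$ with $p_{a_i}=2^{n+i+1}+2^{i-1}$, $p_{b_i}=2^{n+i}$, $p_{c_i}=2^{n+i-1}+2^{i-1}$, and $p_\ell$ a sufficiently large number. For each $i$ define $\omega_i(\sigma)=0$ if $a_i\in M_1$ and $b_i,c_i\in M_2$; $\omega_i(\sigma)=1$ if $a_i\in M_2$ and $b_i,c_i\in M_1$; and $\omega_i(\sigma)=-1$ otherwise. A 3-swap interchanges the machine assignments of exactly three jobs (some on each machine); it is improving if the makespan strictly decreases. *)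

From mathcomp Require Import all_boot all_order all_algebra.
Set Implicit Arguments. Unset Strict Implicit. Unset Printing Implicit Defensive.

(* Jobs: [Some (t, k)] with t = 0,1,2 for a, b, c and k : 'I_n the
   (0-based) index, i.e. paper index i = k + 1; [None] is the long job ell. *)
Definition job (n : nat) := option ('I_3 * 'I_n)%type.

Definition ja n (k : 'I_n) : job n := Some (ord0, k).
Definition jb n (k : 'I_n) : job n := Some (inord 1, k).
Definition jc n (k : 'I_n) : job n := Some (inord 2, k).
Definition jl n : job n := None.

Definition ptime (n pl : nat) (x : job n) : nat :=
  match x with
  | None => pl
  | Some (t, k) =>
      let i := (k : nat).+1 in
      if (t : nat) == 0 then 2 ^ (n + i + 1) + 2 ^ (i - 1)
      else if (t : nat) == 1 then 2 ^ (n + i)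
      else 2 ^ (n + i - 1) + 2 ^ (i - 1)
  end.

(* A schedule: [s x = true] iff job x is on machine 1 (else machine 2). *)
Definition schedule (n : nat) := job n -> bool.

Definition load1 n pl (s : schedule n) : nat := \sum_(x : job n | s x) ptime pl x.
Definition load2 n pl (s : schedule n) : nat := \sum_(x : job n | ~~ s x) ptime pl x.
Definition makespan n pl (s : schedule n) : nat := maxn (load1 pl s) (load2 pl s).

Definition omega n (s : schedule n) (k : 'I_n) : int :=
  if [&& s (ja k), ~~ s (jb k) & ~~ s (jc k)] then Posz 0
  else if [&& ~~ s (ja k), s (jb k) & s (jc k)] then Posz 1
  else Negz 0.

Definition three_swap n (s s' : schedule n) : Prop :=
  exists S : {set job n},
    [/\ #|S| = 3,
        (exists2 x, x \in S & s x),
        (exists2 y, y \in S & ~~ s y) &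
        forall z, s' z = (if z \in S then ~~ s z else s z)].

Definition improving_three_swap n pl (s s' : schedule n) : Prop :=
  three_swap s s' /\ makespan pl s' < makespan pl s.

Inductive improves_to n pl : schedule n -> schedule n -> Prop :=
  | imp_refl s : improves_to pl s s
  | imp_step s s' s'' : improving_three_swap pl s s' -> improves_to pl s' s'' ->
                        improves_to pl s s''.

From mathcomp Require Import all_boot all_order all_algebra zify.
Set Implicit Arguments. Unset Strict Implicit. Unset Printing Implicit Defensive.

(* Since the long job lies on M1 and outweighs all other jobs together, the
   makespan is the load of M1, so a 3-swap is improving iff the jobs it moves
   off M1 weigh more than those it moves onto M1.  In paper indices, starting
   from omega = (1, ..., 1, 0) on 1..j, swap {c_1, b_(j-1)} against c_j, then
   {b_i, c_(i+1)} against a_i for i = 1, ..., j-2, and finally a_j against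
   {a_(j-1), b_j}.  In the middle and last swaps the high parts 2^(n+i) of the
   processing times cancel and the low parts 2^(i-1) decide; in the first swap
   c_1 contributes 2^n > 2^(j-1). *)

(* [ptime 0] gives the long job length [0]. *)
Definition short_total n : nat := \sum_(x : job n) ptime 0 x.

Section LongJobOnFirstMachine.
Variables (n pl : nat).
Hypothesis long_pl : short_total n <= pl.
Implicit Types (s : schedule n) (r : seq (job n)).

Lemma makespan_load1 s : s (jl n) -> makespan pl s = load1 pl s.
Proof.
move=> sl; rewrite /makespan; apply/maxn_idPl.
have pl_le1 : pl <= load1 pl s by rewrite /load1 (bigD1 (jl n)) //= leq_addr.
apply: leq_trans (leq_trans long_pl pl_le1).
have -> : load2 pl s = \sum_(x | ~~ s x) ptime 0 x.
  by apply: eq_bigr => -[[t k]|] //; rewrite sl.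
by rewrite /short_total [X in _ <= X](bigID (fun x => ~~ s x)) leq_addr.
Qed.

Lemma sum_uniq_mkcond r (P : pred (job n)) (F : job n -> nat) : uniq r ->
  \sum_(w <- r | P w) F w = \sum_w (if (w \in r) && P w then F w else 0).
Proof.
move=> ur; rewrite big_mkcond big_uniq // big_mkcond.
by apply: eq_bigr => w _; case: (w \in r).
Qed.

Lemma load1_swap r s s' : uniq r ->
    (forall w, s' w = if w \in r then ~~ s w else s w) ->
  load1 pl s' + \sum_(w <- r | s w) ptime pl w
    = load1 pl s + \sum_(w <- r | ~~ s w) ptime pl w.
Proof.
move=> ur s'E; rewrite /load1 [X in _ + X = _](sum_uniq_mkcond _ _ ur).
rewrite [X in _ = _ + X](sum_uniq_mkcond _ _ ur) [X in X + _ = _]big_mkcond.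
rewrite [X in _ = X + _]big_mkcond -!big_split /=.
by apply: eq_bigr => w _; rewrite s'E; case: (w \in r); case: (s w); rewrite /= ?addn0.
Qed.

Lemma improving_swap r s s' :
    uniq r -> size r = 3 -> jl n \notin r -> s (jl n) -> ~~ all s r ->
    (forall w, s' w = if w \in r then ~~ s w else s w) ->
    \sum_(w <- r | ~~ s w) ptime pl w < \sum_(w <- r | s w) ptime pl w ->
  improving_three_swap pl s s'.
Proof.
move=> ur r3 rl sl r_off s'E lt_sum.
have s'l : s' (jl n) by rewrite s'E (negbTE rl).
have r_on : has s r.
  by apply: contraLR lt_sum => no_on; rewrite [X in _ < X]big_hasC.
split.
  exists [set w in r]; split.
  - by rewrite cardsE (card_uniqP ur).
  - by case/hasP: r_on => x xr sx; exists x; rewrite ?inE.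
  - by case/allPn: r_off => y yr sy; exists y; rewrite ?inE.
  - by move=> z; rewrite s'E inE.
rewrite (makespan_load1 sl) (makespan_load1 s'l).
have := load1_swap ur s'E; lia.
Qed.

End LongJobOnFirstMachine.

Lemma improves_to_trans n pl (s1 s2 s3 : schedule n) :
  improves_to pl s1 s2 -> improves_to pl s2 s3 -> improves_to pl s1 s3.
Proof. by elim=> // ? ? ? h _ IH /IH; apply: imp_step h. Qed.

Definition ptime_at n (p : nat * nat) : nat :=
  let: (t, k) := p in
  if t == 0 then 2 ^ (n + k + 2) + 2 ^ k
  else if t == 1 then 2 ^ (n + k + 1) else 2 ^ (n + k) + 2 ^ k.
Arguments ptime_at n p : simpl never.

Section Positions.
Variable n : nat.

Definition valid_pos (p : nat * nat) : bool := (p.1 < 3) && (p.2 < n).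

(* Invalid positions are sent to the long job. *)
Definition job_at (p : nat * nat) : job n :=
  match insub p.1, insub p.2 with Some t, Some k => Some (t, k) | _, _ => jl n end.

Lemma valid_posP p : valid_pos p -> exists (t : 'I_3) (k : 'I_n), p = (t : nat, k : nat).
Proof. by case: p => t k /andP[ht hk]; exists (Ordinal ht), (Ordinal hk). Qed.

Lemma job_at_val (t : 'I_3) (k : 'I_n) : job_at (t : nat, k : nat) = Some (t, k).
Proof. by rewrite /job_at /= !valK. Qed.

Lemma ptime_some pl (t : 'I_3) (k : 'I_n) :
  ptime pl (Some (t, k)) = ptime_at n (t : nat, k : nat).
Proof.
rewrite /ptime /ptime_at; set i := (k : nat).
have -> : n + i.+1 + 1 = n + i + 2 by lia.
have -> : n + i.+1 - 1 = n + i by lia.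
have -> : n + i.+1 = n + i + 1 by lia.
by rewrite subn1.
Qed.

Lemma ptime_job_at pl p : valid_pos p -> ptime pl (job_at p) = ptime_at n p.
Proof. by case/valid_posP=> t [k ->]; rewrite job_at_val ptime_some. Qed.

Lemma mem_map_job_at ps (t : 'I_3) (k : 'I_n) : all valid_pos ps ->
  (Some (t, k) \in map job_at ps) = ((t : nat, k : nat) \in ps).
Proof.
move=> vps; apply/mapP/idP => [[q qps]|tk_ps].
  have /valid_posP[t' [k' q_tk]] := allP vps q qps.
  by move: qps; rewrite q_tk job_at_val => qps [-> ->].
by exists (t : nat, k : nat); rewrite ?job_at_val.
Qed.

Lemma job_at_inj ps : all valid_pos ps -> {in ps &, injective job_at}.
Proof.
move=> vps p q /(allP vps)/valid_posP[t [k ->]] /(allP vps)/valid_posP[t' [k' ->]].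
by rewrite !job_at_val => -[-> ->].
Qed.

Lemma long_job_notin_map ps : all valid_pos ps -> jl n \notin map job_at ps.
Proof.
by move=> vps; apply/mapP=> -[q /(allP vps)/valid_posP[t [k ->]]]; rewrite job_at_val.
Qed.

End Positions.

Section Override.
Variables (n pl J : nat) (s : schedule n).
Hypotheses (J_lt_n : J < n) (long_pl : short_total n <= pl) (s_long : s (jl n)).

Definition override (g : pred (nat * nat)) : schedule n :=
  fun w => if w is Some (t, k) then (if k <= J then g (t : nat, k : nat) else s w) else s w.

Definition in_window (p : nat * nat) : bool := (p.1 < 3) && (p.2 <= J).

Lemma in_window_valid p : in_window p -> valid_pos n p.
Proof. by case/andP=> t3 kJ; rewrite /valid_pos t3 (leq_ltn_trans kJ J_lt_n). Qed.

Lemma override_job_at g p : in_window p -> override g (job_at n p) = g p.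
Proof.
move=> wp; have /valid_posP[t [k tk]] := in_window_valid wp.
by move: wp; rewrite tk job_at_val /override => /andP[_ ->].
Qed.

Lemma override_improving (g g' : pred (nat * nat)) ps s0 :
    s0 =1 override g -> size ps = 3 -> uniq ps -> all in_window ps -> ~~ all g ps ->
    (forall t k, t < 3 -> k <= J ->
       g' (t, k) = if (t, k) \in ps then ~~ g (t, k) else g (t, k)) ->
    \sum_(p <- ps | ~~ g p) ptime_at n p < \sum_(p <- ps | g p) ptime_at n p ->
  improving_three_swap pl s0 (override g').
Proof.
move=> s0E ps3 ups wps g_off g'E lt_sum.
have vps : all (valid_pos n) ps by apply: sub_all wps => p /in_window_valid.
have sumE (P : bool -> bool) : \sum_(p <- ps | P (s0 (job_at n p))) ptime pl (job_at n p)
                             = \sum_(p <- ps | P (g p)) ptime_at n p.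
  rewrite big_seq_cond [RHS]big_seq_cond; apply: eq_big => [p|p /andP[pps _]].
    by case: (boolP (p \in ps)) => //= pps; rewrite s0E override_job_at ?(allP wps).
  by rewrite ptime_job_at ?(allP vps).
apply: (@improving_swap n pl long_pl (map (job_at n) ps)) => //.
- by rewrite (map_inj_in_uniq (job_at_inj vps)).
- by rewrite size_map.
- exact: long_job_notin_map.
- by rewrite s0E.
- rewrite all_map; apply: contra g_off => /allP s0_on; apply/allP => p pps.
  by have := s0_on p pps; rewrite /= s0E override_job_at ?(allP wps).
- case=> [[t k]|]; last by rewrite (negbTE (long_job_notin_map vps)) s0E.
  rewrite !s0E mem_map_job_at // /override; case: leqP => k_J; first exact: g'E.
  suff /negbTE-> : (t : nat, k : nat) \notin ps by [].
  by apply: contraL k_J => /(allP wps)/andP[_ /= kJ]; rewrite -leqNgt.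
- by rewrite big_map (sumE negb) big_map (sumE id).
Qed.

End Override.

Lemma first_swap_gain n J : 0 < J -> J < n ->
  ptime_at n (2, J) < ptime_at n (2, 0) + ptime_at n (1, J.-1).
Proof.
case: J => [|J] // _ lt_Jn; have := ltn_exp2l J.+1 n (ltnSn 1).
rewrite lt_Jn /ptime_at /= !addnS !expnS !expnD; lia.
Qed.

Lemma middle_swap_gain n m : ptime_at n (0, m) < ptime_at n (1, m) + ptime_at n (2, m.+1).
Proof. rewrite /ptime_at /= !addnS !addn0 !expnS !expnD; lia. Qed.

Lemma last_swap_gain n J : 0 < J ->
  ptime_at n (0, J.-1) + ptime_at n (1, J) < ptime_at n (0, J).
Proof. case: J => [|J] // _; rewrite /ptime_at /= !addnS !addn0 !expnS !expnD; lia. Qed.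

Definition initial_pattern J : pred (nat * nat) :=
  fun p => if p.2 < J then p.1 != 0 else p.1 == 0.

(* The state after the first swap and [m] of the middle swaps. *)
Definition sweep_pattern J m : pred (nat * nat) := fun p =>
  let: (t, k) := p in
  if k == J then t != 1
  else if t == 0 then k < m
  else if t == 1 then (m <= k) && (k.+2 <= J)
  else m < k.
Arguments sweep_pattern J m p : simpl never.

Definition final_pattern J : pred (nat * nat) :=
  fun p => if p.2 == J then p.1 != 0 else p.1 == 0.

Ltac decide_nat_tests :=
  repeat match goal with
  | |- context [?a == ?b :> nat] => case: (@eqP nat a b) => ?
  | |- context [(?a <= ?b)%N] => case: (leqP a b) => ?
  end; first [done | exfalso; lia].

Lemma sweep_pattern0E J t k : 0 < J -> t < 3 -> k <= J ->
  sweep_pattern J 0 (t, k) = if (t, k) \in [:: (2, 0); (1, J.-1); (2, J)]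
                             then ~~ initial_pattern J (t, k) else initial_pattern J (t, k).
Proof.
move=> J_pos; case: t => [|[|[|t]]] // _ kJ.
all: rewrite /initial_pattern /sweep_pattern /= ?inE ?xpair_eqE /=; decide_nat_tests.
Qed.

Lemma sweep_patternSE J m t k : m.+2 <= J -> t < 3 -> k <= J ->
  sweep_pattern J m.+1 (t, k) = if (t, k) \in [:: (1, m); (2, m.+1); (0, m)]
                   then ~~ sweep_pattern J m (t, k) else sweep_pattern J m (t, k).
Proof.
move=> mJ; case: t => [|[|[|t]]] // _ kJ.
all: rewrite /sweep_pattern /= ?inE ?xpair_eqE /=; decide_nat_tests.
Qed.

Lemma final_patternE J t k : 0 < J -> t < 3 -> k <= J ->
  final_pattern J (t, k) = if (t, k) \in [:: (0, J); (0, J.-1); (1, J)]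
                   then ~~ sweep_pattern J J.-1 (t, k) else sweep_pattern J J.-1 (t, k).
Proof.
move=> J_pos; case: t => [|[|[|t]]] // _ kJ.
all: rewrite /sweep_pattern /final_pattern /= ?inE ?xpair_eqE /=; decide_nat_tests.
Qed.

Section Sweep.
Variables (n pl J : nat) (s : schedule n).
Hypotheses (J_pos : 0 < J) (J_lt_n : J < n).
Hypotheses (long_pl : short_total n <= pl) (s_long : s (jl n)).
Local Notation swap_improves := (override_improving J_lt_n long_pl s_long).

Lemma initial_to_sweep s0 : s0 =1 override J s (initial_pattern J) ->
  improving_three_swap pl s0 (override J s (sweep_pattern J 0)).
Proof.
move=> s0E; apply: (swap_improves (ps := [:: (2, 0); (1, J.-1); (2, J)]) s0E) => //.
- rewrite /= !inE !xpair_eqE /=; lia.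
- rewrite /= /in_window /=; lia.
- by rewrite /= /initial_pattern ltnn /= !andbF.
- by move=> t k; apply: sweep_pattern0E.
- rewrite !big_cons !big_nil /initial_pattern /= J_pos ltn_predL J_pos ltnn /= !addn0.
  exact: first_swap_gain.
Qed.

Lemma sweep_step m : m.+2 <= J ->
  improving_three_swap pl (override J s (sweep_pattern J m))
                          (override J s (sweep_pattern J m.+1)).
Proof.
move=> mJ; have [b_on c_on a_off] : [/\ sweep_pattern J m (1, m),
    sweep_pattern J m (2, m.+1) & ~~ sweep_pattern J m (0, m)].
  by split; rewrite /sweep_pattern /=; decide_nat_tests.
apply: (swap_improves (ps := [:: (1, m); (2, m.+1); (0, m)]) (frefl _)) => //.
- rewrite /= /in_window /=; lia.
- by rewrite /= (negbTE a_off) !andbF.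
- by move=> t k; apply: sweep_patternSE.
- rewrite !big_cons !big_nil b_on c_on (negbTE a_off) /= !addn0.
  exact: middle_swap_gain.
Qed.

Lemma sweep_steps m : m < J ->
  improves_to pl (override J s (sweep_pattern J 0)) (override J s (sweep_pattern J m)).
Proof.
elim: m => [|m IHm] mJ; first exact: imp_refl.
apply: improves_to_trans (IHm (ltnW mJ)) _.
exact: imp_step (sweep_step mJ) (imp_refl _ _).
Qed.

Lemma sweep_to_final :
  improving_three_swap pl (override J s (sweep_pattern J J.-1))
                          (override J s (final_pattern J)).
Proof.
have [aJ_on a_off b_off] : [/\ sweep_pattern J J.-1 (0, J),
    ~~ sweep_pattern J J.-1 (0, J.-1) & ~~ sweep_pattern J J.-1 (1, J)].
  by split; rewrite /sweep_pattern /=; decide_nat_tests.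
apply: (swap_improves (ps := [:: (0, J); (0, J.-1); (1, J)]) (frefl _)) => //.
- rewrite /= !inE !xpair_eqE /=; lia.
- rewrite /= /in_window /=; lia.
- by rewrite /= (negbTE a_off) !andbF.
- by move=> t k; apply: final_patternE.
- rewrite !big_cons !big_nil aJ_on (negbTE a_off) (negbTE b_off) /= !addn0.
  exact: last_swap_gain.
Qed.

Lemma initial_improves_to_final s0 : s0 =1 override J s (initial_pattern J) ->
  improves_to pl s0 (override J s (final_pattern J)).
Proof.
move=> s0E; apply: imp_step (initial_to_sweep s0E) _.
have last_sweep : J.-1 < J by rewrite ltn_predL.
apply: improves_to_trans (sweep_steps last_sweep) _.
exact: imp_step sweep_to_final (imp_refl _ _).
Qed.

End Sweep.

Lemma omega_eq1 n (s : schedule n) k : omega s k = Posz 1 <->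
  [/\ s (ja k) = false, s (jb k) = true & s (jc k) = true].
Proof.
by rewrite /omega; case: (s (ja k)); case: (s (jb k)); case: (s (jc k)); split=> // -[].
Qed.

Lemma omega_eq0 n (s : schedule n) k : omega s k = Posz 0 <->
  [/\ s (ja k) = true, s (jb k) = false & s (jc k) = false].
Proof.
by rewrite /omega; case: (s (ja k)); case: (s (jb k)); case: (s (jc k)); split=> // -[].
Qed.

Lemma some_job_cases n (t : 'I_3) (k : 'I_n) :
  [\/ (t : nat) = 0 /\ Some (t, k) = ja k, (t : nat) = 1 /\ Some (t, k) = jb k
    | (t : nat) = 2 /\ Some (t, k) = jc k].
Proof.
case: t => [[|[|[|t]]] t3] //; [constructor 1 | constructor 2 | constructor 3];
  by split=> //; congr (Some (_, _)); apply: val_inj; rewrite /= ?inordK.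
Qed.

Lemma override_abc n J (s : schedule n) (g : pred (nat * nat)) (k : 'I_n) : k <= J ->
  [/\ override J s g (ja k) = g (0, k : nat), override J s g (jb k) = g (1, k : nat)
    & override J s g (jc k) = g (2, k : nat)].
Proof. by move=> kJ; rewrite /override /= kJ !inordK. Qed.

Lemma override_initial n (j : 'I_n) (s : schedule n) :
    omega s j = Posz 0 -> (forall i : 'I_n, i < j -> omega s i = Posz 1) ->
  s =1 override j s (initial_pattern j).
Proof.
move=> omega_j omega_lt [[t k]|] //; case: (leqP k j) => kj; last first.
  by rewrite /override leqNgt kj.
have [ovr_a ovr_b ovr_c] := override_abc s (initial_pattern j) kj.
have [sa sb sc] : [/\ s (ja k) = ~~ (k < j), s (jb k) = (k < j) & s (jc k) = (k < j)].
  case: ltnP => [kj'|jk]; first by have [-> -> ->] := (omega_eq1 s k).1 (omega_lt k kj').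
  have omega_k : omega s k = Posz 0.
    by rewrite (_ : k = j) //; apply/val_inj/eqP; rewrite eqn_leq kj jk.
  by have [-> -> ->] := (omega_eq0 s k).1 omega_k.
case: (some_job_cases t k) => -[_ ->].
all: by rewrite ?ovr_a ?ovr_b ?ovr_c ?sa ?sb ?sc /initial_pattern /=; case: (k < j).
Qed.

Lemma omega_override_final n (j : 'I_n) (s : schedule n) (k : 'I_n) : k <= j ->
  omega (override j s (final_pattern j)) k = if (k : nat) == j then Posz 1 else Posz 0.
Proof.
move=> kj; have [ovr_a ovr_b ovr_c] := override_abc s (final_pattern j) kj.
by rewrite /omega ovr_a ovr_b ovr_c /final_pattern /=; case: eqP.
Qed.

(* Indices are 0-based: ordinal k stands for paper index k+1, so
   j in {3..n} is j : 'I_n with 2 <= j. *)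
Theorem lemma9 (n : nat) (hn : 3 <= n) :
  exists P : nat, forall pl : nat, P <= pl ->
  forall (j : 'I_n) (s : schedule n),
    2 <= j ->
    omega s j = Posz 0 ->
    (forall i : 'I_n, i < j -> omega s i = Posz 1) ->
    s (jl n) = true ->
    exists s' : schedule n,
      [/\ improves_to pl s s',
          omega s' j = Posz 1 &
          forall i : 'I_n, i < j -> omega s' i = Posz 0].
Proof.
exists (short_total n) => pl long_pl j s two_le_j omega_j omega_lt s_long.
have j_pos : 0 < j by apply: ltnW.
exists (override j s (final_pattern j)); split.
- have s_initial := override_initial omega_j omega_lt.
  exact: (initial_improves_to_final j_pos (ltn_ord j) long_pl s_long s_initial).
- by rewrite (omega_override_final s (leqnn j)) eqxx.
- by move=> i ij; rewrite (omega_override_final s (ltnW ij)) ltn_eqF.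
Qed.
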